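(* Let $\varphi\colon\mathcal{A}\to\mathcal{A}^*$ be a substitution of constant length $k$. Then: (1) For any $x,y\in\mathcal{A}^{\mathbf{Z}}$ and $m\geq1$, $\varphi^m(x)=\varphi^m(y)$ if and only if $\Theta(x)=\Theta(y)$ for all $\Theta\in\mathrm{F}_{\varphi,m}$. (2) There exists $n\geq1$ such that $\varphi^n$ is column-constant.
   Context: $\varphi$ has constant length $k\geq2$ and acts on $\mathcal{A}^{\mathbf{Z}}$ by concatenation. For $i\in[0,k-1]$, $\Psi_i\colon\mathcal{A}\to\mathcal{A}$, $a\mapsto\varphi(a)_i$ (the $i$-th letter, indexing from $0$), extended letterwise to $\mathcal{A}^{\mathbf{Z}}$. For $\mathbf{i}=i_0\cdots i_{m-1}\in[0,k-1]^m$, $\Psi_{\mathbf{i}}=\Psi_{i_{m-1}}\circ\cdots\circ\Psi_{i_0}$ (identity if $m=0$), and $\mathrm{F}_{\varphi,m}=\{\Psi_{\mathbf{i}}:\mathbf{i}\in[0,k-1]^m\}$. A substitution $\psi$ of constant length is column-constant if the sets $\mathrm{F}_{\psi,m}$, $m\geq1$, are all equal. *)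

From HB Require Import structures.
From mathcomp Require Import all_boot all_order all_algebra.
Set Implicit Arguments. Unset Strict Implicit. Unset Printing Implicit Defensive.

Section Subst.
Variable A : finType.

(* A substitution is phi : A -> seq A; "constant length k" is the
   hypothesis forall a, size (phi a) = k, stated in the theorem. *)

(* Psi_i : a |-> phi(a)_i  (indexing from 0) *)
Definition Psi (phi : A -> seq A) (i : nat) (a : A) : A := nth a (phi a) i.

(* Psi_{i_0 ... i_{m-1}} = Psi_{i_{m-1}} o ... o Psi_{i_0}; identity if m = 0 *)
Definition Psiw (phi : A -> seq A) (w : seq nat) : A -> A :=
  foldl (fun f i => Psi phi i \o f) id w.

Definition Fset (phi : A -> seq A) (k m : nat) : {set {ffun A -> A}} :=
  [set [ffun a => Psiw phi (map val (tval w)) a] | w in {: m.-tuple 'I_k}].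

(* phi acting on A^Z by concatenation: phi(x)_{k n + i} = phi(x_n)_i *)
Definition subst_Z (phi : A -> seq A) (k : nat) (x : int -> A) : int -> A :=
  fun z => Psi phi (absz (z %% k%:Z)%Z) (x (z %/ k%:Z)%Z).

Definition subst_pow (phi : A -> seq A) (n : nat) : A -> seq A :=
  fun a => iter n (fun w => flatten (map phi w)) [:: a].

Definition column_constant (psi : A -> seq A) (l : nat) : Prop :=
  forall m1 m2 : nat, 0 < m1 -> 0 < m2 -> Fset psi l m1 = Fset psi l m2.

End Subst.

From HB Require Import structures.
From mathcomp Require Import all_boot all_order all_algebra.
From mathcomp Require Import zify.
From Stdlib Require Import FunctionalExtensionality.
Set Implicit Arguments. Unset Strict Implicit. Unset Printing Implicit Defensive.

(* Position k^m n + i of phi^m(x) carries the letter phi^m(x_n)_i, so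
   phi^m(x) = phi^m(y) iff x and y have the same image under every column map
   Psi_i of phi^m; and the column maps of phi^m are exactly the Psi_w with w a
   word of length m.  Hence F_{phi^n, m} = F_{phi, nm}.  Since
   F_{phi, a+b} = F_{phi, b} o F_{phi, a}, the map m |-> F_{phi, m} is a monoid
   morphism from (N, +) into a finite monoid, so some F_{phi, n} with n > 0 is
   idempotent; then phi^n is column-constant. *)

Definition word (k m : nat) (w : seq nat) : bool :=
  (size w == m) && all (gtn k) w.

Section FiniteMorphism.
Variables (T : finType) (op : T -> T -> T) (S : nat -> T).
Hypothesis SD : forall a b, S (a + b) = op (S a) (S b).

Lemma addmorph_collision : exists i j, i < j /\ S i = S j.
Proof.
pose f (t : 'I_#|T|.+1) := S t.
have /injectivePn [i [j neq_ij eq_f]] : ~~ injectiveb f.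
  by apply: contraT => /negPn /injectiveP /leq_card; rewrite card_ord ltnn.
have [lt_ij | lt_ji | /val_inj eq_ij] := ltngtP i j.
- by exists i, j.
- by exists j, i.
- by rewrite eq_ij eqxx in neq_ij.
Qed.

Lemma addmorph_idem : exists n, 0 < n /\ forall m, 0 < m -> S (n * m) = S n.
Proof.
have [i [j [lt_ij eq_ij]]] := addmorph_collision.
set p := j - i.
have periodic q : S (i + q * p) = S i.
  elim: q => [|q IHq]; first by rewrite addn0.
  by rewrite mulSnr addnA SD IHq -SD /p (subnKC (ltnW lt_ij)).
have le_i_n : i <= i.+1 * p.
  by rewrite (leq_trans (leqnSn i)) // leq_pmulr // subn_gt0.
exists (i.+1 * p); split; first by rewrite muln_gt0 subn_gt0 lt_ij.
case=> // m _.
have -> : i.+1 * p * m.+1 = (i.+1 * p - i) + (i + (m * i.+1) * p).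
  by rewrite mulnS addnA subnK // mulnAC [i.+1 * m]mulnC.
by rewrite SD periodic -SD subnK.
Qed.

End FiniteMorphism.

Lemma divz_eq_nat (z : int) d : 0 < d ->
  exists q (r : nat), r < d /\ z = (q * d%:Z + r%:Z)%R.
Proof.
move=> d_gt0; have d_neq0 : (d%:Z != 0)%R by rewrite eqz_nat -lt0n.
exists (z %/ d%:Z)%Z, (absz (z %% d%:Z)%Z).
rewrite gez0_abs ?modz_ge0 // -divz_eq -ltz_nat gez0_abs ?modz_ge0 //.
by rewrite ltz_pmod ?ltz_nat.
Qed.

Section ColumnMaps.
Variable A : finType.
Implicit Types (phi : A -> seq A) (f : {ffun A -> A}).

Lemma Psiw_cat phi w1 w2 a :
  Psiw phi (w1 ++ w2) a = Psiw phi w2 (Psiw phi w1 a).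
Proof.
rewrite /Psiw foldl_cat; move: (foldl _ id w1) => g.
by elim: w2 g a => [|i w2 IHw2] g a //=; rewrite IHw2 [RHS]IHw2.
Qed.

Lemma Psiw_rcons phi w i a : Psiw phi (rcons w i) a = Psi phi i (Psiw phi w a).
Proof. by rewrite -cats1 Psiw_cat. Qed.

Lemma FsetP phi k m f :
  reflect (exists2 w, word k m w & f = [ffun a => Psiw phi w a])
          (f \in Fset phi k m).
Proof.
apply: (iffP imsetP) => [[t _ ->] | [w /andP[/eqP size_w all_w] ->]].
  exists (map val (tval t)) => //.
  rewrite /word size_map size_tuple eqxx; apply/allP => _ /mapP[i _ ->].
  exact: ltn_ord.
have size_t : size (pmap insub w : seq 'I_k) == m.
  by rewrite size_pmap_sub -size_w -all_count.
exists (Tuple size_t) => //=.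
by rewrite (pmap_filter (insubK _)) (eq_filter (isSome_insub _)) (all_filterP all_w).
Qed.

Lemma Fset1P phi l f :
  reflect (exists2 i, i < l & f = [ffun a => Psi phi i a]) (f \in Fset phi l 1).
Proof.
apply: (iffP (FsetP _ _ _ _)) => [[[|i [|//]]] | [i lt_il ->]].
- by rewrite /word.
- by rewrite /word /= andbT => lt_il ->; exists i.
- by exists [:: i]; rewrite // /word /= lt_il.
Qed.

Definition comp_set (F G : {set {ffun A -> A}}) : {set {ffun A -> A}} :=
  [set [ffun a => g (f a)] | f : {ffun A -> A} in F, g : {ffun A -> A} in G].

Lemma FsetD phi k a b : Fset phi k (a + b) = comp_set (Fset phi k a) (Fset phi k b).
Proof.
apply/setP => f; apply/FsetP/imset2P.
  case=> w /andP[/eqP size_w all_w] ->.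
  move: all_w; rewrite -{1}(cat_take_drop a w) all_cat => /andP[all_take all_drop].
  exists [ffun x => Psiw phi (take a w) x] [ffun x => Psiw phi (drop a w) x].
  - apply/FsetP; exists (take a w) => //.
    by rewrite /word size_takel ?size_w ?leq_addr // eqxx.
  - apply/FsetP; exists (drop a w) => //.
    by rewrite /word size_drop size_w addKn eqxx.
  by apply/ffunP => x; rewrite !ffunE -Psiw_cat cat_take_drop.
case=> _ _ /FsetP[w1 /andP[/eqP s1 a1] ->] /FsetP[w2 /andP[/eqP s2 a2] ->] ->.
exists (w1 ++ w2); first by rewrite /word size_cat s1 s2 eqxx all_cat a1 a2.
by apply/ffunP => x; rewrite !ffunE Psiw_cat.
Qed.

End ColumnMaps.

Section ConstantLength.
Variables (A : finType) (phi : A -> seq A) (k : nat).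
Hypothesis k_gt0 : 0 < k.
Hypothesis size_phi : forall a, size (phi a) = k.

Lemma size_flatten_map_phi (s : seq A) : size (flatten (map phi s)) = size s * k.
Proof. by elim: s => //= b s IHs; rewrite size_cat size_phi IHs mulSn. Qed.

Lemma size_subst_pow n a : size (subst_pow phi n a) = k ^ n.
Proof. by elim: n => //= n IHn; rewrite size_flatten_map_phi IHn expnSr. Qed.

Lemma nth_flatten_map_phi (s : seq A) a0 b0 q r : q < size s -> r < k ->
  nth a0 (flatten (map phi s)) (q * k + r) = nth a0 (phi (nth b0 s q)) r.
Proof.
elim: s q => [|b s IHs] [|q] //= lt_q lt_r.
  by rewrite nth_cat size_phi lt_r.
by rewrite nth_cat size_phi mulSn -addnA ltnNge leq_addr addKn IHs.
Qed.

Lemma Psi_subst_powS n q r a : q < k ^ n -> r < k ->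
  Psi (subst_pow phi n.+1) (q * k + r) a = Psi phi r (Psi (subst_pow phi n) q a).
Proof.
move=> lt_q lt_r; rewrite /Psi /= (nth_flatten_map_phi a a) ?size_subst_pow //.
by apply: set_nth_default; rewrite size_phi.
Qed.

Lemma Psi_subst_pow_word n i : i < k ^ n ->
  exists2 w, word k n w & Psi (subst_pow phi n) i =1 Psiw phi w.
Proof.
elim: n i => [|n IHn] i lt_i.
  by exists [::] => // a; move: lt_i; rewrite expn0 ltnS leqn0 => /eqP ->.
have [|w /andP[/eqP size_w all_w] eq_w] := IHn (i %/ k).
  by rewrite ltn_divLR // -expnSr.
exists (rcons w (i %% k)).
  by rewrite /word size_rcons size_w eqxx all_rcons /= ltn_pmod.
move=> a; rewrite {1}(divn_eq i k) Psi_subst_powS ?ltn_pmod ?ltn_divLR -?expnSr //.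
by rewrite Psiw_rcons eq_w.
Qed.

Lemma Psiw_subst_pow_index n w : word k n w ->
  exists2 i, i < k ^ n & Psi (subst_pow phi n) i =1 Psiw phi w.
Proof.
elim/last_ind: w n => [|w r IHw] n /andP[/eqP <-]; first by exists 0.
rewrite all_rcons size_rcons => /andP[lt_r all_w].
have [|i lt_i eq_i] := IHw (size w); first by rewrite /word eqxx.
exists (i * k + r).
  by rewrite expnSr -ltn_divLR // divnMDl // divn_small // addn0.
by move=> a; rewrite Psi_subst_powS // Psiw_rcons eq_i.
Qed.

Lemma Fset_subst_pow1 n : Fset (subst_pow phi n) (k ^ n) 1 = Fset phi k n.
Proof.
apply/setP => f; apply/Fset1P/FsetP => [[i /Psi_subst_pow_word[w word_w eq_w] ->] |].
  by exists w => //; apply/ffunP => a; rewrite !ffunE eq_w.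
case=> w /Psiw_subst_pow_index[i lt_i eq_i] ->.
by exists i => //; apply/ffunP => a; rewrite !ffunE eq_i.
Qed.

Lemma Fset_subst_pow n m :
  Fset (subst_pow phi n) (k ^ n) m.+1 = Fset phi k (n * m.+1).
Proof.
elim: m => [|m IHm]; first by rewrite muln1 Fset_subst_pow1.
by rewrite -addn1 FsetD IHm Fset_subst_pow1 -FsetD mulnDr muln1.
Qed.

Lemma subst_Z_at (x : int -> A) (n : int) r : r < k ->
  subst_Z phi k x (n * k%:Z + r%:Z)%R = Psi phi r (x n).
Proof.
move=> lt_rk; have k_neq0 : (k%:Z != 0)%R by rewrite eqz_nat -lt0n.
have r_small : (0 <= r%:Z < k%:Z)%R by rewrite lez_nat ltz_nat.
rewrite /subst_Z divzMDl // divz_small ?GRing.addr0 //.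
by rewrite modzMDl modz_small.
Qed.

Lemma iter_subst_Z_at (x : int -> A) m (n : int) i : i < k ^ m ->
  iter m (subst_Z phi k) x (n * (k ^ m)%:Z + i%:Z)%R
  = Psi (subst_pow phi m) i (x n).
Proof.
elim: m n i => [|m IHm] n i lt_i.
  by move: lt_i; rewrite expn0 ltnS leqn0 => /eqP ->; rewrite GRing.mulr1 GRing.addr0.
have lt_q : i %/ k < k ^ m by rewrite ltn_divLR // -expnSr.
have -> : (n * (k ^ m.+1)%:Z + i%:Z
            = (n * (k ^ m)%:Z + (i %/ k)%:Z) * k%:Z + (i %% k)%:Z)%R.
  by rewrite {1}(divn_eq i k) expnSr; lia.
rewrite iterS subst_Z_at ?ltn_pmod // IHm //.
by rewrite [in RHS](divn_eq i k) Psi_subst_powS ?ltn_pmod.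
Qed.

Lemma iter_subst_Z_eq (x y : int -> A) m :
  iter m (subst_Z phi k) x = iter m (subst_Z phi k) y <->
  forall Theta : {ffun A -> A}, Theta \in Fset (subst_pow phi m) (k ^ m) 1 ->
    Theta \o x = Theta \o y.
Proof.
split=> [eq_xy _ /Fset1P[i lt_i ->] | eq_Theta].
  apply: functional_extensionality => n /=.
  by rewrite !ffunE -!iter_subst_Z_at // eq_xy.
apply: functional_extensionality => z.
have [q [r [lt_r ->]]] : exists q (r : nat), r < k ^ m /\ z = (q * (k ^ m)%:Z + r%:Z)%R.
  by apply: divz_eq_nat; rewrite expn_gt0 k_gt0.
have Psi_r : [ffun a => Psi (subst_pow phi m) r a]
               \in Fset (subst_pow phi m) (k ^ m) 1.
  by apply/Fset1P; exists r.
have /= := congr1 (fun g => g q) (eq_Theta _ Psi_r).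
by rewrite !ffunE !iter_subst_Z_at.
Qed.

End ConstantLength.

Theorem lemma3p8 (A : finType) (phi : A -> seq A) (k : nat)
  (hk : 2 <= k) (hphi : forall a : A, size (phi a) = k) :
  (forall (x y : int -> A) (m : nat), 0 < m ->
     (iter m (subst_Z phi k) x = iter m (subst_Z phi k) y <->
      (forall Theta : {ffun A -> A}, Theta \in Fset phi k m ->
         (fun z : int => Theta (x z)) = (fun z : int => Theta (y z)))))
  /\ (exists n : nat, 0 < n /\ column_constant (subst_pow phi n) (k ^ n)).
Proof.
have k_gt0 : 0 < k by apply: leq_trans hk.
split=> [x y m _ | ]; first by rewrite iter_subst_Z_eq // Fset_subst_pow1.
have [n [n_gt0 idem_n]] := addmorph_idem (@FsetD A phi k).
exists n; split=> // [[|m1]] // [|m2] // _ _.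
by rewrite !Fset_subst_pow // !idem_n.
Qed.
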